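(* Let $k\in\mathbb{R}$ with $k\neq0$ and $|k|\neq1$, and let $g:\mathbb{R}^d\to\mathbb{R}^d$ be a homeomorphism topologically conjugate to the homothety $x\mapsto kx$. Then $g$ satisfies the topological shadowing property.
   Context: Let $(X,d)$ be a metric space and $f:X\to X$ a homeomorphism; $\mathcal{C}^+=\{\epsilon:X\to\mathbb{R}^+ : \epsilon \text{ continuous}\}$. For $\delta\in\mathcal{C}^+$, a sequence $\{x_n\}_{n\in\mathbb{Z}}\subset X$ is a $\delta$-pseudo-orbit of $f$ if $d(f(x_n),x_{n+1})<\delta(f(x_n))$ for every $n\in\mathbb{Z}$. For $\epsilon\in\mathcal{C}^+$, the sequence $\{x_n\}$ is $\epsilon$-shadowed by an orbit if there is $y\in X$ with $d(f^n(y),x_n)<\epsilon(x_n)$ for every $n\in\mathbb{Z}$. The homeomorphism $f$ satisfies the topological shadowing property if for every $\epsilon\in\mathcal{C}^+$ there exists $\delta\in\mathcal{C}^+$ such that every $\delta$-pseudo-orbit is $\epsilon$-shadowed by an orbit. $\mathbb{R}^d$ carries the Euclidean metric. *)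

From Stdlib Require Import Reals Lra ZArith.
Open Scope R_scope.

Definition continuous_map {X Y : Type} (dX : X -> X -> R) (dY : Y -> Y -> R)
  (f : X -> Y) : Prop :=
  forall x eps, 0 < eps -> exists delta, 0 < delta /\
    forall y, dX x y < delta -> dY (f x) (f y) < eps.

Definition homeomorphism {X : Type} (d : X -> X -> R) (f : X -> X) : Prop :=
  exists finv : X -> X,
    (forall x, finv (f x) = x) /\ (forall y, f (finv y) = y) /\
    continuous_map d d f /\ continuous_map d d finv.

Definition Cplus {X : Type} (d : X -> X -> R) (e : X -> R) : Prop :=
  continuous_map d (fun a b => Rabs (a - b)) e /\ forall x, 0 < e x.

Definition pseudo_orbit {X : Type} (d : X -> X -> R) (f : X -> X)
  (delta : X -> R) (xs : Z -> X) : Prop :=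
  forall n : Z, d (f (xs n)) (xs (n + 1)%Z) < delta (f (xs n)).

(** The full orbit (f^n y)_{n in Z} is encoded as a sequence
    ys with ys 0 = y and ys (n+1) = f (ys n); for a bijection f this is
    exactly n |-> f^n y. *)
Definition eps_shadowed {X : Type} (d : X -> X -> R) (f : X -> X)
  (eps : X -> R) (xs : Z -> X) : Prop :=
  exists ys : Z -> X,
    (forall n : Z, ys (n + 1)%Z = f (ys n)) /\
    (forall n : Z, d (ys n) (xs n) < eps (xs n)).

Definition topological_shadowing {X : Type} (d : X -> X -> R) (f : X -> X) : Prop :=
  forall eps, Cplus d eps ->
    exists delta, Cplus d delta /\
      forall xs : Z -> X, pseudo_orbit d f delta xs -> eps_shadowed d f eps xs.

(** Euclidean space R^d: real sequences vanishing from index d on. *)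
Definition Rd (d : nat) : Type := { x : nat -> R | forall i, (d <= i)%nat -> x i = 0 }.

Definition coord {d : nat} (x : Rd d) (i : nat) : R := proj1_sig x i.

Fixpoint sumsq (n : nat) (f : nat -> R) : R :=
  match n with
  | O => 0
  | S m => sumsq m f + f m ^ 2
  end.

Definition euclid_dist {d : nat} (x y : Rd d) : R :=
  sqrt (sumsq d (fun i => coord x i - coord y i)).

Definition Rd_scale {d : nat} (k : R) (x : Rd d) : Rd d.
Proof.
  exists (fun i => k * coord x i).
  intros i Hi. unfold coord. rewrite (proj2_sig x i Hi). ring.
Defined.

Definition top_conjugate {X : Type} (d : X -> X -> R) (g f : X -> X) : Prop :=
  exists h : X -> X, homeomorphism d h /\ forall x, h (g x) = f (h x).

From Pilot Require Import Defs.
From Stdlib Require Import Reals Lra Lia ZArith FunctionalExtensionality ProofIrrelevance Classical.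
From Coquelicot Require Import Hierarchy Series.
Open Scope R_scope.

(* Shadowing passes through a topological conjugacy [h]: for every positive
   continuous tolerance, [h] and its inverse admit a positive continuous modulus
   of continuity adapted to it, so tolerances can be pushed through [h].
   For the homothety, write a pseudo-orbit as [x (n+1) = k x n + e n] and look
   for the orbit [x n - s n] with [s (n+1) = e n + k s n]: for |k| > 1 take
   [s n = - sum_j k^-(j+1) e (n+j)], for |k| < 1 take [s n = sum_j k^j e (n-1-j)].
   Since |e n| <= ||k| - 1|, coordinates of a pseudo-orbit grow up to an additive
   1 when |k| > 1, and are at most |k| times any earlier one plus 1 when |k| < 1.
   So every defect entering [s n] is measured at a point [k x m] whose box of
   radius |k x m| + 1 contains [x n]; choosing delta below eps on such boxes
   (by compactness) makes |s n| small against eps (x n). *)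

Lemma Rd_ext d (x y : Rd d) : (forall i, coord x i = coord y i) -> x = y.
Proof.
  destruct x as [f Hf], y as [g Hg]; unfold coord; simpl; intros H.
  assert (f = g) by (apply functional_extensionality; auto). subst.
  f_equal. apply proof_irrelevance.
Qed.

Lemma coord_out d (x : Rd d) i : (d <= i)%nat -> coord x i = 0.
Proof. intros H; unfold coord; apply (proj2_sig x); auto. Qed.

Lemma coord_scale d k (x : Rd d) i : coord (Rd_scale k x) i = k * coord x i.
Proof. reflexivity. Qed.

Definition Rd_trunc (d : nat) (f : nat -> R) : Rd d.
Proof.
  exists (fun i => if (i <? d)%nat then f i else 0).
  intros i Hi. apply Nat.ltb_ge in Hi. rewrite Hi. reflexivity.
Defined.

Lemma coord_trunc d f i : (i < d)%nat -> coord (Rd_trunc d f) i = f i.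
Proof. intros Hi. unfold coord; simpl. apply Nat.ltb_lt in Hi. rewrite Hi. reflexivity. Qed.

Lemma sumsq_nonneg n f : 0 <= sumsq n f.
Proof. induction n; simpl; [lra | nra]. Qed.

Lemma sumsq_ext n f g :
  (forall i, (i < n)%nat -> f i ^ 2 = g i ^ 2) -> sumsq n f = sumsq n g.
Proof.
  induction n; intros H; cbn [sumsq]; auto.
  rewrite IHn by (intros; apply H; lia). rewrite (H n) by lia. reflexivity.
Qed.

Lemma sumsq_term n f i : (i < n)%nat -> f i ^ 2 <= sumsq n f.
Proof.
  induction n; intros H; [lia |]. cbn [sumsq].
  destruct (Nat.eq_dec i n) as [-> | Hne].
  - pose proof (sumsq_nonneg n f). lra.
  - pose proof (pow2_ge_0 (f n)). assert (f i ^ 2 <= sumsq n f) by (apply IHn; lia). lra.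
Qed.

Lemma sumsq_le n f B :
  (forall i, (i < n)%nat -> Rabs (f i) <= B) -> sumsq n f <= INR n * B ^ 2.
Proof.
  induction n; intros H; simpl sumsq; [simpl; lra |].
  rewrite S_INR.
  assert (f n ^ 2 <= B ^ 2).
  { rewrite <- pow2_abs. pose proof (Rabs_pos (f n)). assert (Rabs (f n) <= B) by (apply H; lia). nra. }
  assert (sumsq n f <= INR n * B ^ 2) by (apply IHn; intros; apply H; lia).
  lra.
Qed.

Fixpoint sumprod (n : nat) (f g : nat -> R) : R :=
  match n with O => 0 | S m => sumprod m f g + f m * g m end.

Lemma sumsq_add n f g :
  sumsq n (fun i => f i + g i) = sumsq n f + 2 * sumprod n f g + sumsq n g.
Proof. induction n; simpl; [lra |]. rewrite IHn. ring. Qed.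

Lemma cauchy_schwarz n f g : sumprod n f g ^ 2 <= sumsq n f * sumsq n g.
Proof.
  induction n; cbn [sumprod sumsq]; [lra |].
  pose proof (sumsq_nonneg n f). pose proof (sumsq_nonneg n g).
  set (P := sumprod n f g) in *. set (U := sumsq n f) in *. set (V := sumsq n g) in *.
  set (a := f n). set (b := g n).
  assert (2 * P * a * b <= U * b ^ 2 + V * a ^ 2).
  { apply Rsqr_incr_0_var; rewrite ?Rsqr_pow2; [| nra].
    assert (P ^ 2 * (a ^ 2 * b ^ 2) <= U * V * (a ^ 2 * b ^ 2)) by (apply Rmult_le_compat_r; nra).
    pose proof (pow2_ge_0 (U * b ^ 2 - V * a ^ 2)). nra. }
  nra.
Qed.

Lemma minkowski n f g :
  sqrt (sumsq n (fun i => f i + g i)) <= sqrt (sumsq n f) + sqrt (sumsq n g).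
Proof.
  pose proof (sumsq_nonneg n f). pose proof (sumsq_nonneg n g).
  pose proof (sqrt_pos (sumsq n f)). pose proof (sqrt_pos (sumsq n g)).
  assert (sumprod n f g <= sqrt (sumsq n f) * sqrt (sumsq n g)).
  { apply Rsqr_incr_0_var; rewrite ?Rsqr_pow2; [| nra].
    rewrite Rpow_mult_distr, !pow2_sqrt by auto. apply cauchy_schwarz. }
  rewrite <- (sqrt_pow2 (sqrt (sumsq n f) + sqrt (sumsq n g))) by lra.
  apply sqrt_le_1_alt. rewrite sumsq_add.
  replace ((sqrt (sumsq n f) + sqrt (sumsq n g)) ^ 2) with
    (sqrt (sumsq n f) ^ 2 + 2 * (sqrt (sumsq n f) * sqrt (sumsq n g)) + sqrt (sumsq n g) ^ 2) by ring.
  rewrite !pow2_sqrt by auto. lra.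
Qed.

Section EuclideanDistance.
Variable d : nat.
Implicit Types x y z : Rd d.

Lemma euclid_dist_refl x : euclid_dist x x = 0.
Proof.
  unfold euclid_dist. apply Rle_antisym; [| apply sqrt_pos].
  rewrite <- sqrt_0. apply sqrt_le_1_alt.
  replace 0 with (INR d * 0 ^ 2) by ring. apply sumsq_le.
  intros i _. rewrite Rminus_diag, Rabs_R0. lra.
Qed.

Lemma euclid_dist_sym x y : euclid_dist x y = euclid_dist y x.
Proof. unfold euclid_dist. f_equal. apply sumsq_ext. intros; ring. Qed.

Lemma euclid_dist_triangle x y z : euclid_dist x z <= euclid_dist x y + euclid_dist y z.
Proof.
  unfold euclid_dist.
  rewrite (sumsq_ext d (fun i => coord x i - coord z i)
     (fun i => (coord x i - coord y i) + (coord y i - coord z i))) by (intros; ring).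
  apply minkowski.
Qed.

Lemma coord_le_euclid_dist x y i : Rabs (coord x i - coord y i) <= euclid_dist x y.
Proof.
  destruct (le_lt_dec d i).
  - rewrite !coord_out, Rminus_diag, Rabs_R0 by auto. apply sqrt_pos.
  - unfold euclid_dist. rewrite <- (sqrt_pow2 (Rabs _)) by apply Rabs_pos.
    apply sqrt_le_1_alt. rewrite pow2_abs.
    apply (sumsq_term d (fun i => coord x i - coord y i)); auto.
Qed.

Lemma euclid_dist_le_coord x y B : 0 <= B ->
  (forall i, (i < d)%nat -> Rabs (coord x i - coord y i) <= B) ->
  euclid_dist x y <= (INR d + 1) * B.
Proof.
  intros HB H. pose proof (pos_INR d). unfold euclid_dist.
  rewrite <- (sqrt_pow2 ((INR d + 1) * B)) by nra.
  apply sqrt_le_1_alt. apply Rle_trans with (INR d * B ^ 2); [apply sumsq_le; auto | nra].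
Qed.

Definition Rd0 : Rd d := exist _ (fun _ => 0) (fun _ _ => eq_refl).

Definition Rd_norm x : R := euclid_dist x Rd0.

Lemma Rabs_coord_le_norm x i : Rabs (coord x i) <= Rd_norm x.
Proof.
  pose proof (coord_le_euclid_dist x Rd0 i) as H.
  unfold coord at 2 in H; simpl in H. rewrite Rminus_0_r in H. exact H.
Qed.

Lemma Rd_norm_le x y : Rd_norm y <= Rd_norm x + euclid_dist x y.
Proof.
  unfold Rd_norm. rewrite (euclid_dist_sym x y).
  pose proof (euclid_dist_triangle y x Rd0). lra.
Qed.

End EuclideanDistance.

Section MetricSpace.
Variables (X : Type) (dist : X -> X -> R).
Hypothesis dist_refl : forall x, dist x x = 0.
Hypothesis dist_sym : forall x y, dist x y = dist y x.
Hypothesis dist_triangle : forall x y z, dist x z <= dist x y + dist y z.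

Lemma dist_nonneg x y : 0 <= dist x y.
Proof. pose proof (dist_triangle x y x). rewrite dist_refl, (dist_sym y x) in H. lra. Qed.

(* The supremum [L z] of the radii [r <= 1] for which [Q _ r] holds on the
   whole ball of radius [r] around [z] is positive and 1-Lipschitz; [L / 2]
   is strictly below it, hence admissible. *)
Lemma Cplus_choice (Q : X -> R -> Prop) :
  (forall z r r', Q z r -> 0 < r' <= r -> Q z r') ->
  (forall z, exists s, 0 < s /\ forall z', dist z z' < s -> Q z' s) ->
  exists rho, Cplus dist rho /\ forall z, Q z (rho z).
Proof.
  intros Hdown Hloc.
  set (E := fun z r => 0 < r <= 1 /\ forall z', dist z z' < r -> Q z' r).
  assert (Hne : forall z, exists r, E z r).
  { intros z. destruct (Hloc z) as (s & Hs & HQ). exists (Rmin s 1).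
    pose proof (Rmin_l s 1). pose proof (Rmin_r s 1).
    split; [split; [apply Rmin_glb_lt |]; lra |].
    intros z' Hz'. apply Hdown with s; [apply HQ; lra |].
    split; [apply Rmin_glb_lt |]; lra. }
  assert (Hb : forall z, bound (E z)) by (intros z; exists 1; intros r Hr; apply Hr).
  set (L := fun z => proj1_sig (completeness (E z) (Hb z) (Hne z))).
  assert (HL : forall z, is_lub (E z) (L z)) by (intros; apply (proj2_sig (completeness _ _ _))).
  assert (Lpos : forall z, 0 < L z).
  { intros z. destruct (Hne z) as (r & Hr).
    apply Rlt_le_trans with r; [apply Hr | apply HL, Hr]. }
  assert (Llip : forall z z', L z <= L z' + dist z z').
  { intros z z'. apply HL. intros r [Hr HQ].
    pose proof (Lpos z'). pose proof (dist_nonneg z z').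
    destruct (Rle_dec r (dist z z')); [lra |].
    enough (HE : E z' (r - dist z z')) by (pose proof (proj1 (HL z') _ HE); lra).
    split; [lra |]. intros z'' Hz''.
    apply Hdown with r; [| lra]. apply HQ.
    pose proof (dist_triangle z z' z''). lra. }
  exists (fun z => L z / 2). split; [split |].
  - intros x eps Heps. exists eps. split; auto. intros y Hy.
    pose proof (Llip x y). pose proof (Llip y x). rewrite (dist_sym y x) in *.
    apply Rabs_def1; lra.
  - intros z. pose proof (Lpos z). lra.
  - intros z. pose proof (Lpos z).
    destruct (classic (exists r, E z r /\ L z / 2 < r)) as [(r & [Hr HQ] & Hlt) | Hno].
    + apply Hdown with r; [apply HQ; rewrite dist_refl |]; lra.
    + assert (L z <= L z / 2); [| lra].
      apply HL. intros r Hr. apply Rnot_lt_le. intros Hlt. apply Hno. eauto.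
Qed.

Lemma continuous_map_Cplus_modulus (phi : X -> X) (eta : X -> R) :
  continuous_map dist dist phi -> Cplus dist eta ->
  exists rho, Cplus dist rho /\
    forall u v, dist u v < rho u -> dist (phi u) (phi v) < eta (phi u).
Proof.
  intros Hphi [Heta Hpos].
  apply (Cplus_choice (fun u r => forall v, dist u v < r -> dist (phi u) (phi v) < eta (phi u))).
  - intros z r r' H Hr v Hv. apply H. lra.
  - intros u. set (e0 := eta (phi u)). assert (He0 : 0 < e0) by apply Hpos.
    destruct (Heta (phi u) (e0 / 2)) as (gam & Hgam & Heta_u); [lra |].
    destruct (Hphi u (Rmin gam (e0 / 4))) as (t & Ht & Hphi_u); [apply Rmin_glb_lt; lra |].
    pose proof (Rmin_l gam (e0 / 4)). pose proof (Rmin_r gam (e0 / 4)).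
    exists (t / 2). split; [lra |]. intros u' Hu' v Hv.
    assert (dist (phi u) (phi u') < Rmin gam (e0 / 4)) by (apply Hphi_u; lra).
    assert (dist (phi u) (phi v) < Rmin gam (e0 / 4)).
    { apply Hphi_u. pose proof (dist_triangle u u' v). lra. }
    assert (Rabs (e0 - eta (phi u')) < e0 / 2) as Hclose%Rabs_def2 by (apply Heta_u; lra).
    pose proof (dist_triangle (phi u') (phi u) (phi v)). rewrite (dist_sym (phi u') (phi u)) in *.
    lra.
Qed.

Lemma topological_shadowing_conjugate (g f : X -> X) :
  top_conjugate dist g f -> topological_shadowing dist f -> topological_shadowing dist g.
Proof.
  intros (h & (hinv & Hhinv_h & Hh_hinv & Hh & Hhinv) & Hconj) Hf eps Heps.
  destruct (continuous_map_Cplus_modulus hinv eps Hhinv Heps) as (eps_f & Heps_f & Hmod_hinv).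
  destruct (Hf eps_f Heps_f) as (delta_f & Hdelta_f & Hshadow).
  destruct (continuous_map_Cplus_modulus h delta_f Hh Hdelta_f) as (delta & Hdelta & Hmod_h).
  exists delta. split; auto. intros xs Hxs.
  destruct (Hshadow (fun n => h (xs n))) as (ws & Hws_orbit & Hws_close).
  - intros n. rewrite <- Hconj. apply Hmod_h, Hxs.
  - exists (fun n => hinv (ws n)). split.
    + intros n. rewrite Hws_orbit, <- (Hh_hinv (ws n)) at 1. rewrite <- Hconj. apply Hhinv_h.
    + intros n. rewrite dist_sym, <- (Hhinv_h (xs n)).
      apply Hmod_hinv. rewrite dist_sym. apply Hws_close.
Qed.

End MetricSpace.

Lemma geometric_series_bound (c : R) (u : nat -> R) (C : R) :
  Rabs c < 1 -> (forall j, Rabs (u j) <= C) ->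
  ex_series (fun j => c ^ j * u j) /\
  Rabs (Series (fun j => c ^ j * u j)) <= C / (1 - Rabs c).
Proof.
  intros Hc Hu.
  assert (HC : 0 <= C) by (apply Rle_trans with (Rabs (u 0%nat)); [apply Rabs_pos | auto]).
  assert (Hgeom : is_series (fun j => C * Rabs c ^ j) (C * / (1 - Rabs c))).
  { assert (Hc' : Rabs (Rabs c) < 1) by (rewrite Rabs_Rabsolu; exact Hc).
    exact (is_series_scal_l C _ _ (is_series_geom (Rabs c) Hc')). }
  assert (Hterm : forall j, 0 <= Rabs (c ^ j * u j) <= C * Rabs c ^ j).
  { intros j. split; [apply Rabs_pos |]. rewrite Rabs_mult, <- RPow_abs, Rmult_comm.
    apply Rmult_le_compat_r; [apply pow_le, Rabs_pos | auto]. }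
  assert (Habs : ex_series (fun j => Rabs (c ^ j * u j))).
  { apply (@ex_series_le R_AbsRing R_CompleteNormedModule _ (fun j => C * Rabs c ^ j));
      [| eexists; eauto].
    intros j. unfold norm; simpl. unfold abs; simpl. rewrite Rabs_Rabsolu. apply Hterm. }
  split; [apply ex_series_Rabs, Habs |].
  apply Rle_trans with (Series (fun j => Rabs (c ^ j * u j))); [apply Series_Rabs, Habs |].
  apply Rle_trans with (Series (fun j => C * Rabs c ^ j)).
  - apply Series_le; [apply Hterm | eexists; eauto].
  - rewrite (is_series_unique _ _ Hgeom). unfold Rdiv. lra.
Qed.

Section ScalarRecurrence.
Variable k : R.

Lemma expanding_pseudo_orbit_grows (u : Z -> R) :
  (forall n, Rabs (u (n + 1)%Z - k * u n) <= Rabs k - 1) ->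
  forall n j, Rabs (u n) <= Rabs (u (n + Z.of_nat j)%Z) + 1.
Proof.
  intros Hdefect n j.
  destruct (Rle_lt_dec (Rabs (u n)) 1) as [Hsmall | Hlarge].
  { pose proof (Rabs_pos (u (n + Z.of_nat j)%Z)). lra. }
  enough (Rabs (u n) <= Rabs (u (n + Z.of_nat j)%Z)) by lra.
  induction j as [| j IH].
  - replace (n + Z.of_nat 0)%Z with n by lia. lra.
  - replace (n + Z.of_nat (S j))%Z with (n + Z.of_nat j + 1)%Z by lia.
    set (p := (n + Z.of_nat j)%Z) in *.
    pose proof (Hdefect p) as Hp.
    pose proof (Rabs_triang_inv (k * u p) (k * u p - u (p + 1)%Z)) as Htri.
    replace (k * u p - (k * u p - u (p + 1)%Z)) with (u (p + 1)%Z) in Htri by ring.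
    rewrite Rabs_minus_sym, Rabs_mult in Htri.
    pose proof (Rabs_pos (u (p + 1)%Z - k * u p)).
    assert (0 <= (Rabs k - 1) * (Rabs (u p) - 1)) by (apply Rmult_le_pos; lra).
    nra.
Qed.

Lemma contracting_pseudo_orbit_bounded (u : Z -> R) :
  (forall n, Rabs (u (n + 1)%Z - k * u n) <= 1 - Rabs k) ->
  forall m j, Rabs (u (m + 1 + Z.of_nat j)%Z) <= Rabs k * Rabs (u m) + 1.
Proof.
  intros Hdefect m.
  assert (Hstep : forall p, Rabs (u (p + 1)%Z) <= Rabs k * Rabs (u p) + (1 - Rabs k)).
  { intros p. replace (u (p + 1)%Z) with (k * u p + (u (p + 1)%Z - k * u p)) by ring.
    eapply Rle_trans; [apply Rabs_triang |]. rewrite Rabs_mult.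
    pose proof (Hdefect p). lra. }
  pose proof (Rabs_pos k). pose proof (Rabs_pos (u m)).
  assert (Rabs k <= 1) by (pose proof (Hdefect m); pose proof (Rabs_pos (u (m + 1)%Z - k * u m)); lra).
  induction j as [| j IH].
  - replace (m + 1 + Z.of_nat 0)%Z with (m + 1)%Z by lia. pose proof (Hstep m). lra.
  - replace (m + 1 + Z.of_nat (S j))%Z with (m + 1 + Z.of_nat j + 1)%Z by lia.
    eapply Rle_trans; [apply Hstep |].
    assert (Rabs k * Rabs (u (m + 1 + Z.of_nat j)%Z) <= Rabs k * (Rabs k * Rabs (u m) + 1))
      by (apply Rmult_le_compat_l; auto).
    assert (Rabs k * (Rabs k * Rabs (u m)) <= 1 * (Rabs k * Rabs (u m)))
      by (apply Rmult_le_compat_r; [apply Rmult_le_pos |]; auto).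
    lra.
Qed.

Definition future_sum (e : Z -> R) (n : Z) : R :=
  - / k * Series (fun j => (/ k) ^ j * e (n + Z.of_nat j)%Z).

Definition past_sum (e : Z -> R) (n : Z) : R :=
  Series (fun j => k ^ j * e (n - 1 - Z.of_nat j)%Z).

Section Expanding.
Hypothesis k_expanding : 1 < Rabs k.

Let inv_k_contracting : Rabs (/ k) < 1.
Proof. rewrite Rabs_inv, <- Rinv_1. apply Rinv_1_lt_contravar; lra. Qed.

Let k_neq0 : k <> 0.
Proof. intros ->. rewrite Rabs_R0 in k_expanding. lra. Qed.

Lemma future_sum_bound (e : Z -> R) (n : Z) (B : R) :
  (forall j, Rabs (e (n + Z.of_nat j)%Z) <= B) ->
  Rabs (future_sum e n) <= B / (Rabs k - 1).
Proof.
  intros HB. destruct (geometric_series_bound (/ k) _ B inv_k_contracting HB) as [_ Hsum].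
  unfold future_sum. rewrite Rabs_mult, Rabs_Ropp, Rabs_inv in *.
  apply Rle_trans with (/ Rabs k * (B / (1 - / Rabs k))).
  - apply Rmult_le_compat_l; [apply Rlt_le, Rinv_0_lt_compat |]; lra.
  - right. field. lra.
Qed.

Lemma future_sum_step (e : Z -> R) (M : R) :
  (forall m, Rabs (e m) <= M) ->
  forall n, future_sum e (n + 1) = e n + k * future_sum e n.
Proof.
  intros HM n.
  destruct (geometric_series_bound (/ k) (fun j => e (n + Z.of_nat j)%Z) M inv_k_contracting)
    as [Hex _]; [auto |].
  unfold future_sum. rewrite (Series_incr_1 _ Hex).
  rewrite (Series_ext (fun j => (/ k) ^ S j * e (n + Z.of_nat (S j))%Z)
             (fun j => / k * ((/ k) ^ j * e (n + 1 + Z.of_nat j)%Z))).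
  - rewrite Series_scal_l. replace (n + Z.of_nat 0)%Z with n by lia. simpl. field. auto.
  - intros j. replace (n + Z.of_nat (S j))%Z with (n + 1 + Z.of_nat j)%Z by lia. simpl. ring.
Qed.

End Expanding.

Section Contracting.
Hypothesis k_contracting : Rabs k < 1.

Lemma past_sum_bound (e : Z -> R) (n : Z) (B : R) :
  (forall j, Rabs (e (n - 1 - Z.of_nat j)%Z) <= B) ->
  Rabs (past_sum e n) <= B / (1 - Rabs k).
Proof. intros HB. apply (geometric_series_bound k _ B k_contracting HB). Qed.

Lemma past_sum_step (e : Z -> R) (M : R) :
  (forall m, Rabs (e m) <= M) ->
  forall n, past_sum e (n + 1) = e n + k * past_sum e n.
Proof.
  intros HM n.
  destruct (geometric_series_bound k (fun j => e (n + 1 - 1 - Z.of_nat j)%Z) M k_contracting)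
    as [Hex _]; [auto |].
  unfold past_sum. rewrite (Series_incr_1 _ Hex).
  rewrite (Series_ext (fun j => k ^ S j * e (n + 1 - 1 - Z.of_nat (S j))%Z)
             (fun j => k * (k ^ j * e (n - 1 - Z.of_nat j)%Z))).
  - rewrite Series_scal_l. replace (n + 1 - 1 - Z.of_nat 0)%Z with n by lia. simpl. ring.
  - intros j. replace (n + 1 - 1 - Z.of_nat (S j))%Z with (n - 1 - Z.of_nat j)%Z by lia.
    simpl. ring.
Qed.

End Contracting.
End ScalarRecurrence.

(* Confined to a module so that MathComp's notations do not clash with those of
   the Stdlib reals used elsewhere. *)
Module BoxCompactness.
From mathcomp Require Import all_boot all_order all_algebra.
From mathcomp Require Import all_classical all_reals all_analysis.
From mathcomp Require Import Rstruct Rstruct_topology.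
Import Order.TTheory GRing.Theory Num.Theory.
Local Open Scope classical_set_scope.
Local Open Scope ring_scope.

Definition Rd_of_row {d} (v : 'rV[R]_d) : Rd d :=
  Rd_trunc d (fun i => if insub i is Some j then v ord0 j else 0).

Lemma coord_Rd_of_row d (v : 'rV[R]_d) (j : 'I_d) : Defs.coord (Rd_of_row v) j = v ord0 j.
Proof. by rewrite coord_trunc ?valK //; apply/ssrnat.ltP. Qed.

Lemma Rd_of_row_coord d (x : Rd d) : Rd_of_row (\row_(j < d) Defs.coord x j) = x.
Proof.
  apply: Rd_ext => i; have [lt_id | /ssrnat.leP le_di] := ltnP i d.
  - by rewrite (coord_Rd_of_row _ _ (Ordinal lt_id)) mxE.
  - by rewrite !coord_out.
Qed.

Lemma continuous_Rd_of_row d (e : Rd d -> R) :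
  continuous_map euclid_dist (fun a b => Rabs (a - b)) e ->
  continuous (fun v : 'rV[R]_d => e (Rd_of_row v)).
Proof.
  move=> Hc v. apply/(@cvgrPdist_lt _ R^o _ _ (nbhs_filter v)) => eps /RltP eps0.
  have [del [del0 Hdel]] := Hc (Rd_of_row v) eps eps0.
  pose eta := (del / (2 * (INR d + 1)))%coqR.
  have Hd := pos_INR d.
  have eta0 : (0 < eta)%coqR by apply: Rdiv_lt_0_compat => //; lra.
  have : nbhs v (fun t : 'rV[R]_d => forall j : 'I_d, `|v ord0 j - t ord0 j| < eta).
  { apply/nbhs_ballP; exists eta; first by apply/RltP.
    by move=> t [_ H] j; exact: (H ord0 j). }
  apply: filterS => t Ht. rewrite -RabsE. apply/RltP/Hdel.
  apply: (Rle_lt_trans _ ((INR d + 1) * eta)%coqR).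
  - apply: euclid_dist_le_coord; first lra.
    move=> i /ssrnat.ltP lt_id.
    rewrite (coord_Rd_of_row _ _ (Ordinal lt_id)) (coord_Rd_of_row _ _ (Ordinal lt_id)) RabsE.
    by apply/RleP/ltW/Ht.
  - rewrite /eta. have -> : ((INR d + 1) * (del / (2 * (INR d + 1))) = del / 2)%coqR
      by field; lra.
    lra.
Qed.

Lemma Cplus_lower_bound_on_box d (e : Rd d -> R) (r : R) :
  Cplus euclid_dist e -> (0 <= r)%coqR ->
  exists c, (0 < c)%coqR /\
    forall x, (forall i, Rabs (Defs.coord x i) <= r)%coqR -> (c <= e x)%coqR.
Proof.
  move=> [Hc Hpos] /RleP r0.
  pose A := [set v : 'rV[R]_d | forall i, `[- r, r]%classic (v ord0 i)].
  have cA : compact A :=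
    @rV_compact R d (fun _ => `[- r, r]%classic) (fun _ => @segment_compact R (- r) r).
  have A0 : A !=set0.
  { exists 0 => i /=; rewrite mxE in_itv /= oppr_le0 r0; by []. }
  have [v0 _ Hmin] := compact_EVT_min A0 cA
    (continuous_subspaceT (continuous_Rd_of_row _ _ Hc)).
  exists (e (Rd_of_row v0)); split; first exact: Hpos.
  move=> x Hx. have Ax : A (\row_j Defs.coord x j).
  { move=> i. rewrite /= mxE in_itv /= -ler_norml -RabsE. exact/RleP/Hx. }
  apply/RleP. have := Hmin _ (mem_set Ax). by rewrite /= Rd_of_row_coord.
Qed.

End BoxCompactness.

Lemma Cplus_below_on_boxes d (eps : Rd d -> R) (c : R) :
  Cplus euclid_dist eps -> 0 < c ->
  exists delta, Cplus euclid_dist delta /\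
    forall z x, (forall i, Rabs (coord x i) <= Rd_norm d z + 1) -> delta z <= c * Rmin 1 (eps x).
Proof.
  intros Heps Hc.
  apply (Cplus_choice _ _ (@euclid_dist_refl d) (@euclid_dist_sym d) (@euclid_dist_triangle d)
    (fun z r => forall x, (forall i, Rabs (coord x i) <= Rd_norm d z + 1) -> r <= c * Rmin 1 (eps x))).
  - intros z r r' H Hr x Hx. specialize (H x Hx). lra.
  - intros z.
    assert (Hnorm : 0 <= Rd_norm d z) by apply sqrt_pos.
    (* The box of radius [|z| + 2] contains the boxes of radius [|z'| + 1] for [z'] near [z]. *)
    destruct (BoxCompactness.Cplus_lower_bound_on_box d eps (Rd_norm d z + 2) Heps ltac:(lra))
      as (c0 & Hc0 & Hbox).
    pose proof (Rmin_l 1 (c * Rmin 1 c0)). pose proof (Rmin_r 1 (c * Rmin 1 c0)).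
    set (s := Rmin 1 (c * Rmin 1 c0)) in *.
    assert (0 < Rmin 1 c0) by (apply Rmin_glb_lt; lra).
    assert (0 < s) by (apply Rmin_glb_lt; [lra | apply Rmult_lt_0_compat; auto]).
    exists s. split; auto. intros z' Hz' x Hx.
    assert (c0 <= eps x).
    { apply Hbox. intros i. pose proof (Rd_norm_le d z z'). specialize (Hx i). lra. }
    assert (c * Rmin 1 c0 <= c * Rmin 1 (eps x)) by (apply Rmult_le_compat_l, Rle_min_compat_l; lra).
    lra.
Qed.

Section HomothetyPseudoOrbit.
Variables (d : nat) (k : R) (eps : Rd d -> R) (xs : Z -> Rd d).
Hypothesis eps_pos : forall x, 0 < eps x.

Let defect i n := coord (xs (n + 1)%Z) i - k * coord (xs n) i.
Let radius n := eps (xs n) / (2 * (INR d + 1)).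

Lemma eps_shadowed_of_correction (s : nat -> Z -> R) :
  (forall i n, (i < d)%nat -> s i (n + 1)%Z = defect i n + k * s i n) ->
  (forall i n, (i < d)%nat -> Rabs (s i n) <= radius n) ->
  eps_shadowed euclid_dist (Rd_scale k) eps xs.
Proof.
  intros Hstep Hbound.
  exists (fun n => Rd_trunc d (fun i => coord (xs n) i - s i n)). split.
  - intros n. apply Rd_ext. intros i. rewrite coord_scale.
    destruct (lt_dec i d) as [Hi | Hi].
    + rewrite !coord_trunc, Hstep by auto. unfold defect. ring.
    + rewrite !coord_out by lia. ring.
  - intros n. pose proof (eps_pos (xs n)). pose proof (pos_INR d).
    assert (0 <= radius n) by (unfold radius; apply Rlt_le, Rdiv_lt_0_compat; lra).
    eapply Rle_lt_trans; [apply (euclid_dist_le_coord d _ _ (radius n)); auto |].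
    + intros i Hi. rewrite coord_trunc by auto.
      replace (coord (xs n) i - s i n - coord (xs n) i) with (- s i n) by ring.
      rewrite Rabs_Ropp. auto.
    + unfold radius. replace ((INR d + 1) * (eps (xs n) / (2 * (INR d + 1))))
        with (eps (xs n) / 2) by (field; lra). lra.
Qed.

Hypothesis defect_small : forall i n, Rabs (defect i n) <= Rabs (Rabs k - 1).
Hypothesis defect_dominated : forall n m,
  (forall i, Rabs (coord (xs n) i) <= Rabs k * Rabs (coord (xs m) i) + 1) ->
  forall i, Rabs (defect i m) <= Rabs (Rabs k - 1) * radius n.

Lemma expanding_homothety_shadowed : 1 < Rabs k ->
  eps_shadowed euclid_dist (Rd_scale k) eps xs.
Proof.
  intros Hk. assert (Hlam : Rabs (Rabs k - 1) = Rabs k - 1) by (apply Rabs_pos_eq; lra).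
  pose proof defect_small as Hsmall. pose proof defect_dominated as Hdominated.
  rewrite Hlam in Hsmall, Hdominated.
  apply (eps_shadowed_of_correction (fun i => future_sum k (defect i))).
  - intros i n _. apply (future_sum_step k Hk _ (Rabs k - 1)), Hsmall.
  - intros i n _. apply Rle_trans with ((Rabs k - 1) * radius n / (Rabs k - 1)).
    + apply (future_sum_bound k Hk). intros j. apply Hdominated. intros i'.
      pose proof (expanding_pseudo_orbit_grows k (fun n => coord (xs n) i') (Hsmall i') n j).
      pose proof (Rabs_pos (coord (xs (n + Z.of_nat j)%Z) i')). nra.
    + right. field. lra.
Qed.

Lemma contracting_homothety_shadowed : Rabs k < 1 ->
  eps_shadowed euclid_dist (Rd_scale k) eps xs.
Proof.
  intros Hk. assert (Hlam : Rabs (Rabs k - 1) = 1 - Rabs k)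
    by (rewrite Rabs_minus_sym; apply Rabs_pos_eq; lra).
  pose proof defect_small as Hsmall. pose proof defect_dominated as Hdominated.
  rewrite Hlam in Hsmall, Hdominated.
  apply (eps_shadowed_of_correction (fun i => past_sum k (defect i))).
  - intros i n _. apply (past_sum_step k Hk _ (1 - Rabs k)), Hsmall.
  - intros i n _. apply Rle_trans with ((1 - Rabs k) * radius n / (1 - Rabs k)).
    + apply (past_sum_bound k Hk). intros j. apply Hdominated. intros i'.
      pose proof (contracting_pseudo_orbit_bounded k (fun n => coord (xs n) i') (Hsmall i')
        (n - 1 - Z.of_nat j)%Z j) as H.
      replace (n - 1 - Z.of_nat j + 1 + Z.of_nat j)%Z with n in H by lia. exact H.
    + right. field. lra.
Qed.

End HomothetyPseudoOrbit.

Lemma homothety_topological_shadowing d k :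
  Rabs k <> 1 -> topological_shadowing euclid_dist (@Rd_scale d k).
Proof.
  intros Hk1 eps Heps.
  set (lam := Rabs (Rabs k - 1)).
  assert (Hlam : 0 < lam) by (apply Rabs_pos_lt; lra).
  pose proof (pos_INR d).
  set (c := lam / (2 * (INR d + 1))).
  assert (Hc : 0 < c <= lam).
  { unfold c. split; [apply Rdiv_lt_0_compat; lra |].
    apply Rmult_le_reg_r with (2 * (INR d + 1)); [lra |]. field_simplify; nra. }
  destruct (Cplus_below_on_boxes d eps c Heps (proj1 Hc)) as (delta & Hdelta & Hbelow).
  destruct Heps as [_ Heps_pos].
  exists delta. split; auto. intros xs Hxs.
  assert (Hdefect : forall i n,
    Rabs (coord (xs (n + 1)%Z) i - k * coord (xs n) i) <= delta (Rd_scale k (xs n))).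
  { intros i n. rewrite Rabs_minus_sym, <- coord_scale.
    eapply Rle_trans; [apply coord_le_euclid_dist | apply Rlt_le, Hxs]. }
  assert (Hbelow_c : forall z x, (forall i, Rabs (coord x i) <= Rd_norm d z + 1) ->
    delta z <= c /\ delta z <= c * eps x).
  { intros z x Hx. pose proof (Hbelow z x Hx).
    pose proof (Rmin_l 1 (eps x)). pose proof (Rmin_r 1 (eps x)).
    assert (c * Rmin 1 (eps x) <= c * 1) by (apply Rmult_le_compat_l; lra).
    assert (c * Rmin 1 (eps x) <= c * eps x) by (apply Rmult_le_compat_l; lra).
    lra. }
  assert (Hsmall : forall i n, Rabs (coord (xs (n + 1)%Z) i - k * coord (xs n) i) <= lam).
  { intros i n. eapply Rle_trans; [apply Hdefect |].
    enough (delta (Rd_scale k (xs n)) <= c) by lra.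
    apply (Hbelow_c _ (Rd_scale k (xs n))). intros i'.
    pose proof (Rabs_coord_le_norm d (Rd_scale k (xs n)) i'). lra. }
  assert (Hdominated : forall n m,
    (forall i, Rabs (coord (xs n) i) <= Rabs k * Rabs (coord (xs m) i) + 1) ->
    forall i, Rabs (coord (xs (m + 1)%Z) i - k * coord (xs m) i)
              <= lam * (eps (xs n) / (2 * (INR d + 1)))).
  { intros n m Hm i. eapply Rle_trans; [apply Hdefect |].
    replace (lam * (eps (xs n) / (2 * (INR d + 1)))) with (c * eps (xs n)) by (unfold c; field; lra).
    apply (Hbelow_c _ (xs n)). intros i'.
    eapply Rle_trans; [apply Hm |]. rewrite <- Rabs_mult, <- coord_scale.
    pose proof (Rabs_coord_le_norm d (Rd_scale k (xs m)) i'). lra. }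
  destruct (Rlt_le_dec 1 (Rabs k)) as [Hk | Hk].
  - apply expanding_homothety_shadowed; auto.
  - apply contracting_homothety_shadowed; auto. lra.
Qed.

Theorem mainTheorem7 (d : nat) (k : R) (g : Rd d -> Rd d) :
  k <> 0 -> Rabs k <> 1 ->
  homeomorphism euclid_dist g ->
  top_conjugate euclid_dist g (Rd_scale k) ->
  topological_shadowing euclid_dist g.
Proof.
  intros _ Hk1 _ Hconj.
  apply (topological_shadowing_conjugate _ _ (@euclid_dist_refl d) (@euclid_dist_sym d)
    (@euclid_dist_triangle d) g (Rd_scale k) Hconj).
  apply homothety_topological_shadowing, Hk1.
Qed.
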